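(* Consider the P-SSD algorithm described in the context, executed over a constant (time-invariant) digraph $G$. Let $P$ be a directed path of length $l$ in $G$ from node $j$ to node $i$. Then for each iteration $k\in\mathbb{N}$ and all $q\ge k+l$, $$\mathcal{R}(C_q^i)\subseteq\mathcal{R}(C_k^j)\qquad\text{and}\qquad \mathcal{R}(D(X_j)C_q^i)=\mathcal{R}(D(Y_j)C_q^i).$$
   Context: Data setting: a map $T:\mathcal{M}\to\mathcal{M}$, $\mathcal{M}\subseteq\mathbb{R}^n$; a dictionary $D(x)=[d_1(x),\dots,d_{N_d}(x)]$ of real-valued functions on $\mathcal{M}$; data matrices $X,Y\in\mathbb{R}^{N\times n}$ whose $i$-th rows $x_i^T,y_i^T$ satisfy $y_i=T(x_i)$; $D(X)\in\mathbb{R}^{N\times N_d}$ is the matrix with rows $D(x_1),\dots,D(x_N)$ (similarly $D(Y)$). Assumption: $D(X)$ and $D(Y)$ have full column rank. There are $M$ agents; agent $i$ holds local dictionary snapshots $D(X_i),D(Y_i)$ (obtained from a subset of the snapshot pairs) such that the union over $i$ of the rows of $[D(X_i),D(Y_i)]$ equals the set of rows of $[D(X),D(Y)]$. There are signature matrices $D(X_s),D(Y_s)$ with full column rank such that the rows of $[D(X_s),D(Y_s)]$ are contained in the rows of $[D(X_i),D(Y_i)]$ for every $i$. SSD algorithm: given $A,B\in\mathbb{R}^{m\times q}$, set $A_1=A$, $B_1=B$, $C=I_q$, and iterate: let $[Z^A_j;Z^B_j]$ be a matrix whose columns form a basis of the null space of $[A_j,B_j]$ (with $Z^A_j$ having as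 many rows as $A_j$ has columns); if the null space is trivial return $0$; if the number of rows of $Z^A_j$ is at most its number of columns, return $C$; otherwise set $C\leftarrow CZ^A_j$, $A_{j+1}=A_jZ^A_j$, $B_{j+1}=B_jZ^A_j$. Its output is denoted $\mathrm{SSD}(A,B)$. P-SSD algorithm: at iteration $k\ge1$ the digraph $G_k$ is used; an edge $(j,i)\in E_k$ means $j$ is an in-neighbor of $i$, and $\mathcal{N}_{\mathrm{in}}^k(i)$ denotes the in-neighbors of $i$ in $G_k$. Each agent $i$ sets $C_0^i=I_{N_d}$, $\mathrm{flag}_0^i=0$, and for $k=1,2,\dots$: receives $C_{k-1}^j$ for $j\in\mathcal{N}_{\mathrm{in}}^k(i)$; sets $D_k^i=\mathrm{basis}\big(\bigcap_{j\in\{i\}\cup\mathcal{N}_{\mathrm{in}}^k(i)}\mathcal{R}(C_{k-1}^j)\big)$; sets $E_k^i=\mathrm{SSD}(D(X_i)D_k^i,D(Y_i)D_k^i)$; if the number of columns of $D_k^iE_k^i$ is strictly less than that of $C_{k-1}^i$, sets $C_k^i=D_k^iE_k^i$ and $\mathrm{flag}_k^i=0$; otherwise sets $C_k^i=C_{k-1}^i$ and $\mathrm{flag}_k^i=1$; then transmits $C_k^i$ to its out-neighbors. Here $\mathrm{basis}(\mathcal{A})$ returns a matrix whose columns form a basis of the subspace $\mathcal{A}$, and returns $0$ if $\mathcal{A}=\{0\}$; the matrix $0$ is regarded as having $0$ columns. $\mathcal{R}(\cdot)$ denotes range space. A directed path of length $l$ from $j$ to $i$ is a sequence of $l+1$ nodes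 starting at $j$ and ending at $i$ in which each consecutive ordered pair is an edge. *)

From HB Require Import structures.
From mathcomp Require Import all_boot all_order all_algebra.
From mathcomp Require Import reals.
Set Implicit Arguments. Unset Strict Implicit. Unset Printing Implicit Defensive.
Import GRing.Theory.
Local Open Scope ring_scope.

Definition range_le (R : fieldType) m n1 n2 (A : 'M[R]_(m, n1)) (B : 'M[R]_(m, n2)) : bool :=
  (A^T <= B^T)%MS.
Definition range_eq (R : fieldType) m n1 n2 (A : 'M[R]_(m, n1)) (B : 'M[R]_(m, n2)) : bool :=
  (A^T == B^T)%MS.

Definition null_basis (R : fieldType) m k r (Mx : 'M[R]_(m, k)) (Z : 'M[R]_(k, r)) : Prop :=
  [/\ Mx *m Z = 0, \rank Z = r & forall v : 'cV[R]_k, Mx *m v = 0 -> range_le v Z].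

(* Runs of the SSD loop from state (A_j, B_j, C); the last index is the output.
   Every choice of null-space bases is allowed (relational semantics). *)
Inductive ssd_iter (R : fieldType) (q m : nat) :
  forall p, 'M[R]_(m, p) -> 'M[R]_(m, p) -> 'M[R]_(q, p) -> forall c, 'M[R]_(q, c) -> Prop :=
| SSD_trivial p (A B : 'M[R]_(m, p)) (C : 'M[R]_(q, p)) (Z : 'M[R]_(p + p, 0)) :
    null_basis (row_mx A B) Z -> @ssd_iter R q m p A B C 0 0
| SSD_stop p (A B : 'M[R]_(m, p)) (C : 'M[R]_(q, p)) r (Z : 'M[R]_(p + p, r)) :
    null_basis (row_mx A B) Z -> (0 < r)%N -> (p <= r)%N -> @ssd_iter R q m p A B C p C
| SSD_step p (A B : 'M[R]_(m, p)) (C : 'M[R]_(q, p)) r (Z : 'M[R]_(p + p, r)) c (C' : 'M[R]_(q, c)) :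
    null_basis (row_mx A B) Z -> (0 < r)%N -> (r < p)%N ->
    @ssd_iter R q m r (A *m usubmx Z) (B *m usubmx Z) (C *m usubmx Z) c C' ->
    @ssd_iter R q m p A B C c C'.

Definition SSD_rel (R : fieldType) m q (A B : 'M[R]_(m, q)) c (E : 'M[R]_(q, c)) : Prop :=
  @ssd_iter R q m q A B 1%:M c E.

Definition inter_basis (R : fieldType) (I : Type) Nd (S : I -> bool)
  (Cs : I -> {c : nat & 'M[R]_(Nd, c)}) d (Dm : 'M[R]_(Nd, d)) : Prop :=
  [/\ \rank Dm = d,
      (forall j, S j -> range_le Dm (projT2 (Cs j))) &
      (forall v : 'cV[R]_Nd, (forall j, S j -> range_le v (projT2 (Cs j))) -> range_le v Dm)].

(* C is an execution of P-SSD over the constant digraph E (E j i : edge (j,i),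
   j in-neighbour of i); C k i is C_k^i. *)
Definition pssd_exec (R : fieldType) (Mag Nd : nat) (E : rel 'I_Mag) (Nloc : 'I_Mag -> nat)
  (DXl DYl : forall i : 'I_Mag, 'M[R]_(Nloc i, Nd))
  (C : nat -> 'I_Mag -> {c : nat & 'M[R]_(Nd, c)}) : Prop :=
  (forall i, C 0%N i = existT _ Nd 1%:M) /\
  (forall (k : nat) (i : 'I_Mag), exists d (Dk : 'M[R]_(Nd, d)) e (Ek : 'M[R]_(d, e)),
     [/\ inter_basis (fun j => (j == i) || E j i) (C k) Dk,
         SSD_rel (DXl i *m Dk) (DYl i *m Dk) Ek &
         C k.+1 i = if (e < projT1 (C k i))%N then existT _ e (Dk *m Ek) else C k i]).

Definition dict_mat (R : fieldType) n N Nd (D : 'rV[R]_n -> 'rV[R]_Nd) (X : 'M[R]_(N, n))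
  : 'M[R]_(N, Nd) := \matrix_(r < N) D (row r X).

From HB Require Import structures.
From mathcomp Require Import all_boot all_order all_algebra.
From mathcomp Require Import reals zify.
Set Implicit Arguments. Unset Strict Implicit. Unset Printing Implicit Defensive.
Import GRing.Theory.
Local Open Scope ring_scope.

(* The signature rows are rows of every local snapshot, so every local dictionary
   matrix has full column rank.  SSD then always returns a matrix E of full column
   rank with R(A E) = R(B E); hence every C_k^i has full column rank and, from
   k = 1 on, R(D(X_i) C_k^i) = R(D(Y_i) C_k^i).  Ranges only shrink in time and
   along edges, which gives the inclusion along the path.  For the invariance at j
   write D(Y_j) C_k^j = D(X_j) C_k^j K, C_q^i = C_k^j G and
   D(Y_s) C_q^i = D(X_s) C_q^i K'.  The signature rows are shared by i and j, and
   D(X_s) C_k^j has full column rank, so K G = G K', i.e.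
   D(Y_j) C_q^i = D(X_j) C_q^i K'; a rank count turns this inclusion into an
   equality. *)

Local Notation col_free A := (row_free (trmx A)).

Section ColumnFree.
Variable F : fieldType.

Lemma mxrankM_col_free m n p (A : 'M[F]_(m, n)) (B : 'M_(n, p)) :
  col_free A -> \rank (A *m B) = \rank B.
Proof. by move=> freeA; rewrite -mxrank_tr trmx_mul mxrankMfree // mxrank_tr. Qed.

Lemma col_freeM m n p (A : 'M[F]_(m, n)) (B : 'M_(n, p)) :
  col_free A -> col_free B -> col_free (A *m B).
Proof. by move=> freeA; rewrite /row_free !mxrank_tr mxrankM_col_free. Qed.

Lemma col_free_inj m n p (A : 'M[F]_(m, n)) :
  col_free A -> injective (@mulmx F m n p A).
Proof.
move=> freeA B1 B2 eqAB; apply: trmx_inj; apply: (row_free_inj freeA) => /=.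
by rewrite -!trmx_mul eqAB.
Qed.

Lemma col_free1 n : col_free (1%:M : 'M[F]_n).
Proof. by rewrite trmx1 row_free_unit unitmx1. Qed.

Lemma col_free_rowsub m m' n (f : 'I_m' -> 'I_m) (A : 'M[F]_(m, n)) :
  col_free (rowsub f A) -> col_free A.
Proof.
rewrite /row_free !mxrank_tr !eqn_leq !rank_leq_col /= => /leq_trans; apply.
exact/mxrankS/rowsub_sub.
Qed.

Lemma range_leP m n1 n2 (A : 'M[F]_(m, n1)) (B : 'M_(m, n2)) :
  reflect (exists K, A = B *m K) (range_le A B).
Proof.
apply: (iffP submxP) => [[K eqA] | [K ->]]; exists K^T.
  by rewrite -[A]trmxK eqA trmx_mul trmxK.
by rewrite trmx_mul.
Qed.

Lemma range_eq_rank m n1 n2 (A : 'M[F]_(m, n1)) (B : 'M_(m, n2)) :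
  range_le B A -> (\rank A <= \rank B)%N -> range_eq A B.
Proof.
move=> leBA leAB; rewrite /range_eq andbC.
by rewrite -(geq_leqif (mxrank_leqif_eq leBA)) !mxrank_tr.
Qed.

Lemma range_eq_trans m n1 n2 n3 (A : 'M[F]_(m, n1)) (B : 'M_(m, n2)) (C : 'M_(m, n3)) :
  range_eq A B -> range_eq B C -> range_eq A C.
Proof. by move=> /eqmxP eqAB /eqmxP eqBC; apply/eqmxP/(eqmx_trans eqAB). Qed.

Lemma range_eqMl m n p1 p2 (A : 'M[F]_(m, n)) (M1 : 'M_(n, p1)) (M2 : 'M_(n, p2)) :
  range_eq M1 M2 -> range_eq (A *m M1) (A *m M2).
Proof. by rewrite /range_eq !trmx_mul => /eqmxP/(eqmxMr A^T)/eqmxP. Qed.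

Lemma range_le_rowsub m m' n p (f : 'I_m' -> 'I_m) (A B : 'M[F]_(m, n)) (M : 'M_(n, p)) :
  range_le (B *m M) (A *m M) -> range_le (rowsub f B *m M) (rowsub f A *m M).
Proof.
move=> /range_leP [K eqBM]; apply/range_leP; exists K.
by rewrite !mul_rowsub_mx eqBM -mul_rowsub_mx.
Qed.

Lemma exists_rowsub_row_mx m m' n1 n2 (A : 'M[F]_(m, n1)) (B : 'M_(m, n2))
    (A' : 'M_(m', n1)) (B' : 'M_(m', n2)) :
  (forall r, exists r', row r' (row_mx A B) = row r (row_mx A' B')) ->
  exists f, A' = rowsub f A /\ B' = rowsub f B.
Proof.
move=> /fin_all_exists [f rowsE]; exists f.
have rowsE' r : row (f r) A = row r A' /\ row (f r) B = row r B'.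
  by apply: eq_row_mx; rewrite -!row_row_mx rowsE.
by split; apply/row_matrixP => r; rewrite row_rowsub; case: (rowsE' r).
Qed.

Lemma range_le_signature m s n c c' (A B : 'M[F]_(m, n)) (As Bs : 'M_(s, n))
    (f : 'I_s -> 'I_m) (M : 'M_(n, c)) (M' : 'M_(n, c')) :
  As = rowsub f A -> Bs = rowsub f B -> col_free (As *m M) ->
  range_le (B *m M) (A *m M) -> range_le M' M -> range_le (Bs *m M') (As *m M') ->
  range_le (B *m M') (A *m M').
Proof.
move=> eqAs eqBs freeAsM /range_leP [K eqBM] /range_leP [G ->] /range_leP [K' eqBsM'].
have eqBsM : Bs *m M = As *m M *m K by rewrite eqAs eqBs !mul_rowsub_mx eqBM -mul_rowsub_mx.
have commKG : K *m G = G *m K'.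
  by apply: (col_free_inj freeAsM); rewrite mulmxA -eqBsM -mulmxA eqBsM' !mulmxA.
by apply/range_leP; exists K'; rewrite mulmxA eqBM -!mulmxA commKG.
Qed.

End ColumnFree.

Section SSD.
Variable F : fieldType.

Lemma null_basis_usubmx_col_free m p r (A B : 'M[F]_(m, p)) (Z : 'M_(p + p, r)) :
  null_basis (row_mx A B) Z -> col_free B -> col_free (usubmx Z).
Proof.
move=> [nullZ rankZ _] /row_freeP [G /(congr1 trmx)]; rewrite trmx_mul trmxK trmx1 => invB.
have eqZd : dsubmx Z = - (G^T *m A) *m usubmx Z.
  move: nullZ; rewrite -[Z]vsubmxK mul_row_col col_mxKu col_mxKd => /eqP.
  rewrite addrC addr_eq0 => /eqP eqBZd.
  by rewrite -[dsubmx Z]mul1mx -invB -mulmxA eqBZd mulmxN mulNmx mulmxA.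
have eqZ : Z = col_mx 1%:M (- (G^T *m A)) *m usubmx Z.
  by rewrite mul_col_mx mul1mx -eqZd vsubmxK.
rewrite /row_free mxrank_tr eqn_leq rank_leq_col /=.
by rewrite -[X in (X <= _)%N]rankZ [in X in (X <= _)%N]eqZ mxrankM_maxr.
Qed.

Lemma null_basis_range_eq m p r (A B : 'M[F]_(m, p)) (Z : 'M_(p + p, r)) :
  null_basis (row_mx A B) Z -> \rank A = p -> \rank B = p -> (p <= r)%N -> range_eq A B.
Proof.
move=> [nullZ rankZ _] rankA rankB le_pr.
have : (Z^T <= kermx (row_mx A B)^T)%MS by apply/sub_kermxP; rewrite -trmx_mul nullZ trmx0.
move/mxrankS; rewrite mxrank_ker !mxrank_tr rankZ => le_r.
have rank_AB : (\rank (row_mx A B) <= p)%N.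
  by move: le_r le_pr (rank_leq_col (row_mx A B)); lia.
have eq_AB M : (M^T <= (row_mx A B)^T)%MS -> \rank M = p -> (M^T == (row_mx A B)^T)%MS.
  move=> leM rankM; rewrite -(geq_leqif (mxrank_leqif_eq leM)) !mxrank_tr rankM.
  exact: rank_AB.
have /eqmxP eqA : (A^T == (row_mx A B)^T)%MS.
  by apply: eq_AB rankA; rewrite tr_row_mx -addsmxE addsmxSl.
have /eqmxP eqB : (B^T == (row_mx A B)^T)%MS.
  by apply: eq_AB rankB; rewrite tr_row_mx -addsmxE addsmxSr.
by apply/eqmxP; apply: eqmx_trans eqA (eqmx_sym eqB).
Qed.

Lemma ssd_iter_invariant q m p (A B : 'M[F]_(m, p)) (Cj : 'M_(q, p)) c (C' : 'M_(q, c)) :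
  ssd_iter A B Cj C' -> forall A1 B1 : 'M_(m, q), col_free A1 -> col_free B1 ->
  A = A1 *m Cj -> B = B1 *m Cj -> col_free Cj ->
  col_free C' /\ range_eq (A1 *m C') (B1 *m C').
Proof.
elim=> {p A B Cj c C'} [p A B Cj Z _ | p A B Cj r Z nullZ _ le_pr |
                        p A B Cj r Z c C' nullZ _ _ _ IH]
  A1 B1 freeA1 freeB1 eqA eqB freeCj.
- by rewrite /row_free -leqn0 rank_leq_row /range_eq !mulmx0 submx_refl.
- split=> //; rewrite -eqA -eqB.
  by apply: null_basis_range_eq nullZ _ _ le_pr;
    rewrite ?eqA ?eqB mxrankM_col_free // -mxrank_tr (eqP freeCj).
- have freeB : col_free B by rewrite eqB col_freeM.
  apply: IH; rewrite ?eqA ?eqB ?mulmxA //.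
  exact: col_freeM freeCj (null_basis_usubmx_col_free nullZ freeB).
Qed.

Lemma SSD_rel_spec m q (A B : 'M[F]_(m, q)) c (Ek : 'M_(q, c)) :
  SSD_rel A B Ek -> col_free A -> col_free B -> col_free Ek /\ range_eq (A *m Ek) (B *m Ek).
Proof.
move=> ssdE freeA freeB.
by apply: ssd_iter_invariant ssdE _ _ freeA freeB _ _ (col_free1 _ _); rewrite mulmx1.
Qed.

End SSD.

Section PSSD.
Variables (F : fieldType) (Mag Nd : nat) (E : rel 'I_Mag) (Nloc : 'I_Mag -> nat).
Variables (DXl DYl : forall i : 'I_Mag, 'M[F]_(Nloc i, Nd)).
Variable C : nat -> 'I_Mag -> {c : nat & 'M[F]_(Nd, c)}.
Hypothesis execC : pssd_exec E DXl DYl C.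
Hypothesis freeDXl : forall i, col_free (DXl i).
Hypothesis freeDYl : forall i, col_free (DYl i).

Local Notation Cm k i := (projT2 (C k i)).

Lemma pssd_col_free k i : col_free (Cm k i).
Proof.
case: execC => init step; elim: k i => [|k IH] i; first by rewrite init col_free1.
have [d [Dk [e [Ek [[rankDk _ _] ssdE ->]]]]] := step k i.
case: ifP => _ /=; last exact: IH.
have freeDk : col_free Dk by rewrite /row_free mxrank_tr rankDk.
have [freeEk _] :=
  SSD_rel_spec ssdE (col_freeM (freeDXl i) freeDk) (col_freeM (freeDYl i) freeDk).
exact: col_freeM.
Qed.

Lemma pssd_update k i : exists d (Dk : 'M_(Nd, d)),
  [/\ inter_basis (fun j => (j == i) || E j i) (C k) Dk, range_le (Cm k.+1 i) Dk &
      range_eq (DXl i *m Cm k.+1 i) (DYl i *m Cm k.+1 i)].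
Proof.
case: execC => _ step; have [d [Dk [e [Ek [basisDk ssdE ->]]]]] := step k i.
exists d, Dk; have [rankDk le_DkC _] := basisDk.
have freeDk : col_free Dk by rewrite /row_free mxrank_tr rankDk.
have [freeEk eqEk] :=
  SSD_rel_spec ssdE (col_freeM (freeDXl i) freeDk) (col_freeM (freeDYl i) freeDk).
rewrite -!mulmxA in eqEk.
have le_DkEk : range_le (Dk *m Ek) Dk by rewrite /range_le trmx_mul submxMl.
case: ifP => [_ | ge_e] /=; first by split.
have eq_C : range_eq (Cm k i) (Dk *m Ek).
  apply: range_eq_rank.
    by apply: submx_trans le_DkEk (le_DkC i _); rewrite eqxx.
  rewrite mxrankM_col_free // -[\rank Ek]mxrank_tr (eqP freeEk).
  by rewrite -mxrank_tr (eqP (pssd_col_free k i)) leqNgt ge_e.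
split=> //; first by apply: submx_trans le_DkEk; case/andP: eq_C.
apply: range_eq_trans (range_eqMl _ eq_C) _.
apply: range_eq_trans eqEk _.
by rewrite /range_eq andbC; apply: range_eqMl.
Qed.

Lemma pssd_range_le_in k i j : (j == i) || E j i -> range_le (Cm k.+1 i) (Cm k j).
Proof.
move=> ij; have [d [Dk [[_ le_DkC _] le_CDk _]]] := pssd_update k i.
exact: submx_trans le_CDk (le_DkC j ij).
Qed.

Lemma pssd_range_eq k i : (0 < k)%N -> range_eq (DXl i *m Cm k i) (DYl i *m Cm k i).
Proof. by case: k => // k _; have [d [Dk [_ _ ->]]] := pssd_update k i. Qed.

Lemma pssd_range_mono k m i : range_le (Cm (k + m) i) (Cm k i).
Proof.
elim: m => [|m IH]; first by rewrite addn0 /range_le submx_refl.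
by rewrite addnS; apply: submx_trans (pssd_range_le_in _ _) IH; rewrite eqxx.
Qed.

Lemma pssd_range_path j p k : path E j p -> range_le (Cm (k + size p) (last j p)) (Cm k j).
Proof.
elim: p j k => [|x p IH] j k /=; first by rewrite addn0 /range_le submx_refl.
case/andP=> Ejx Epath; rewrite addnS -addSn.
by apply: submx_trans (IH x k.+1 Epath) (pssd_range_le_in _ _); rewrite Ejx orbT.
Qed.

End PSSD.

Theorem proposition5p1
  (R : realType) (n N Nd : nat)
  (Mset : 'rV[R]_n -> Prop) (T : 'rV[R]_n -> 'rV[R]_n) (D : 'rV[R]_n -> 'rV[R]_Nd)
  (X Y : 'M[R]_(N, n))
  (hTM : forall x, Mset x -> Mset (T x))
  (hXM : forall r : 'I_N, Mset (row r X))
  (hXY : forall r : 'I_N, row r Y = T (row r X))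
  (hrkX : \rank (dict_mat D X) = Nd) (hrkY : \rank (dict_mat D Y) = Nd)
  (Mag : nat) (Nloc : 'I_Mag -> nat) (sel : forall i : 'I_Mag, 'I_(Nloc i) -> 'I_N)
  (hunion : forall r : 'I_N, exists (i : 'I_Mag) (r' : 'I_(Nloc i)),
      row r' (row_mx (rowsub (sel i) (dict_mat D X)) (rowsub (sel i) (dict_mat D Y)))
      = row r (row_mx (dict_mat D X) (dict_mat D Y)))
  (Ns : nat) (DXs DYs : 'M[R]_(Ns, Nd))
  (hrkXs : \rank DXs = Nd) (hrkYs : \rank DYs = Nd)
  (hsig : forall (i : 'I_Mag) (r : 'I_Ns), exists r' : 'I_(Nloc i),
      row r' (row_mx (rowsub (sel i) (dict_mat D X)) (rowsub (sel i) (dict_mat D Y)))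
      = row r (row_mx DXs DYs))
  (E : rel 'I_Mag) (C : nat -> 'I_Mag -> {c : nat & 'M[R]_(Nd, c)})
  (hexec : pssd_exec E (fun i => rowsub (sel i) (dict_mat D X))
                       (fun i => rowsub (sel i) (dict_mat D Y)) C)
  (l : nat) (j i : 'I_Mag) (p : seq 'I_Mag)
  (hpath : path E j p) (hsize : size p = l) (hlast : last j p = i)
  (k q : nat) (hk : (1 <= k)%N) (hq : (k + l <= q)%N) :
  range_le (projT2 (C q i)) (projT2 (C k j)) /\
  range_eq ((rowsub (sel j) (dict_mat D X)) *m (projT2 (C q i)))
        ((rowsub (sel j) (dict_mat D Y)) *m (projT2 (C q i))).
Proof.
set DXl := fun i => rowsub (sel i) (dict_mat D X) in hexec hsig *.
set DYl := fun i => rowsub (sel i) (dict_mat D Y) in hexec hsig *.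
have signature a : exists f, DXs = rowsub f (DXl a) /\ DYs = rowsub f (DYl a).
  exact: exists_rowsub_row_mx (hsig a).
have freeDXs : col_free DXs by rewrite /row_free mxrank_tr hrkXs.
have freeDYs : col_free DYs by rewrite /row_free mxrank_tr hrkYs.
have freeDXl a : col_free (DXl a).
  by have [f [eqXs _]] := signature a; apply: (col_free_rowsub (f := f)); rewrite -eqXs.
have freeDYl a : col_free (DYl a).
  by have [f [_ eqYs]] := signature a; apply: (col_free_rowsub (f := f)); rewrite -eqYs.
have le_qk : range_le (projT2 (C q i)) (projT2 (C k j)).
  rewrite -(subnKC hq) -hsize -hlast.
  exact: submx_trans (pssd_range_mono hexec freeDXl freeDYl _ _ _)
                     (pssd_range_path hexec freeDXl freeDYl _ hpath).
split=> //.
have [fi [eqXi eqYi]] := signature i; have [fj [eqXj eqYj]] := signature j.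
apply: range_eq_rank; last by rewrite !mxrankM_col_free.
apply: range_le_signature eqXj eqYj _ _ le_qk _.
- by rewrite col_freeM // (pssd_col_free hexec freeDXl freeDYl).
- by case/andP: (pssd_range_eq hexec freeDXl freeDYl j hk).
- have q_gt0 : (0 < q)%N by lia.
  rewrite eqXi eqYi; apply: range_le_rowsub.
  by case/andP: (pssd_range_eq hexec freeDXl freeDYl i q_gt0).
Qed.
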